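(* Let $L>0$, $N\in\mathbb{N}_+$, $h=L/N$, $\epsilon>0$, $\theta_0>0$, $\tau>0$, $\alpha\in(0,1)$, $\rho_u>0$, $\rho_w>0$, and let $u^n\in\mathcal{C}_{per}$ with $-1<u^n<1$ pointwise. Let $\{(u_1^{(k)},w_1^{(k)},u_2^{(k)},w_2^{(k)},u_3^{(k)},w_3^{(k)})\}_{k\ge0}$ be the sequence generated by Algorithm 1 (described in the context), and let $(u_1^*,w_1^*,u_2^*,w_2^*,u_3^*,w_3^* )$ be the stationary point of the Lagrange function $\mathcal{L}$ (described in the context). Then, as $k\to\infty$, $$\|u_i^{(k)}-u_i^*\|_2\to0\quad\text{and}\quad\|w_i^{(k)}-w_i^*\|_2\to0\qquad(i=1,2,3).$$
   Context: $\mathcal{C}_{per}$ is the space of real grid functions $\nu=(\nu_{i,j,k})_{i,j,k\in\mathbb{Z}}$ that are $N$-periodic in each index (values at cell centres of a uniform grid of mesh size $h$ on $(0,L)^3$). Inner product $\langle\nu,\xi\rangle=h^2\sum_{i,j,k=1}^N\nu_{i,j,k}\xi_{i,j,k}$, $\|\nu\|_2=\langle\nu,\nu\rangle^{1/2}$. Discrete Laplacian $(\Delta_h\nu)_{i,j,k}=h^{-2}(\nu_{i+1,j,k}+\nu_{i-1,j,k}+\nu_{i,j+1,k}+\nu_{i,j-1,k}+\nu_{i,j,k+1}+\nu_{i,j,k-1}-6\nu_{i,j,k})$; $\|\nabla_h\nu\|_2^2=\sum_{i,j,k=1}^N\big[(\nu_{i+1,j,k}-\nu_{i,j,k})^2+(\nu_{i,j+1,k}-\nu_{i,j,k})^2+(\nu_{i,j,k+1}-\nu_{i,j,k})^2\big]$.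 Operations and inequalities are pointwise; $1$ is the constant grid function. Lagrange function: $\mathcal{L}(u_1,w_1,u_2,w_2,u_3,w_3)=Z_1(u_1,w_1)+Z_2(u_2,w_2)+\langle u_3,u_1-u_2\rangle-\langle w_3,w_1-w_2\rangle$, with $Z_1(u,w)=\frac{\epsilon^2}{2}\|\nabla_hu\|_2^2-\alpha\langle u-u^n,w\rangle-\frac{\tau}{2}\|\nabla_hw\|_2^2$ and $Z_2(u,w)=\langle1+u,\log(1+u)\rangle+\langle1-u,\log(1-u)\rangle-\theta_0\langle u^n,u\rangle-(1-\alpha)\langle u-u^n,w\rangle$ (for $-1<u<1$). A stationary point is a tuple in $\mathcal{C}_{per}^6$ with $-1<u_2^*<1$ satisfying $-\epsilon^2\Delta_hu_1^*-\alpha w_1^*+u_3^*=0$, $\alpha(-u_1^*+u^n)+\tau\Delta_hw_1^*-w_3^*=0$, $\log(1+u_2^* )-\log(1-u_2^* )-\theta_0u^n-(1-\alpha)w_2^*-u_3^*=0$, $(1-\alpha)(-u_2^*+u^n)+w_3^*=0$, $u_1^*=u_2^*$, $w_1^*=w_2^*$. Algorithm 1: set $u_2^{(0)}=u^n$, $w_2^{(0)}=0$, $u_3^{(0)}=0$, $w_3^{(0)}=0$. For $k=0,1,2,\dots$: (i) find $u_1^{(k+1)},w_1^{(k+1)}\in\mathcal{C}_{per}$ solving $-\epsilon^2\Delta_hu_1^{(k+1)}-\alpha w_1^{(k+1)}+u_3^{(k)}+\rho_u(u_1^{(k+1)}-u_2^{(k)})=0$ and $\alpha(-u_1^{(k+1)}+u^n)+\tau\Delta_hw_1^{(k+1)}-w_3^{(k)}-\rho_w(w_1^{(k+1)}-w_2^{(k)})=0$;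 (ii) find $u_2^{(k+1)},w_2^{(k+1)}\in\mathcal{C}_{per}$ with $-1<u_2^{(k+1)}<1$ solving $\log(1+u_2^{(k+1)})-\log(1-u_2^{(k+1)})-\theta_0u^n-(1-\alpha)w_2^{(k+1)}-u_3^{(k)}-\rho_u(u_1^{(k+1)}-u_2^{(k+1)})=0$ and $(1-\alpha)(-u_2^{(k+1)}+u^n)+w_3^{(k)}+\rho_w(w_1^{(k+1)}-w_2^{(k+1)})=0$; (iii) set $u_3^{(k+1)}=u_3^{(k)}+\rho_u(u_1^{(k+1)}-u_2^{(k+1)})$, $w_3^{(k+1)}=w_3^{(k)}+\rho_w(w_1^{(k+1)}-w_2^{(k+1)})$. *)

From mathcomp Require Import all_boot all_order all_algebra.
From mathcomp Require Import all_classical all_reals all_analysis.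
Set Implicit Arguments. Unset Strict Implicit. Unset Printing Implicit Defensive.
Import Order.TTheory GRing.Theory Num.Theory.
Local Open Scope ring_scope.

(* N-periodic grid functions on Z^3 are represented by their values on one
   period, indexed by 'I_N x 'I_N x 'I_N; neighbour indices wrap around via
   ordS / ord_pred (i.e. i+1 and i-1 modulo N). *)
Definition grid (R : Type) (N : nat) := 'I_N -> 'I_N -> 'I_N -> R.

Section Grid.
Variables (R : realType) (N : nat).

Definition ginner (h : R) (u v : grid R N) : R :=
  h ^+ 2 * \sum_(i < N) \sum_(j < N) \sum_(k < N) (u i j k * v i j k).

Definition gnorm2 (h : R) (u : grid R N) : R := Num.sqrt (ginner h u u).

Definition gsub (u v : grid R N) : grid R N := fun i j k => u i j k - v i j k.

Definition glap (h : R) (u : grid R N) : grid R N := fun i j k =>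
  h ^- 2 * (u (ordS i) j k + u (ord_pred i) j k
          + u i (ordS j) k + u i (ord_pred j) k
          + u i j (ordS k) + u i j (ord_pred k) - 6 * u i j k).

End Grid.

From mathcomp Require Import all_boot all_order all_algebra.
From mathcomp Require Import all_classical all_reals all_analysis.
From mathcomp Require Import ring lra.
Set Implicit Arguments. Unset Strict Implicit. Unset Printing Implicit Defensive.
Import Order.TTheory GRing.Theory Num.Theory.
Import numFieldNormedType.Exports.
Local Open Scope classical_set_scope.
Local Open Scope ring_scope.

(* Let e denote the error of an iterate of Algorithm 1 with respect to the stationary point.
   The errors obey the linear recursions of the algorithm, except for the nonlinear term
   g(u2) - g(us), where g(z) = ln(1+z) - ln(1-z) is strongly monotone on (-1,1) and us is the
   stationary value of u2. The energy |e_u3|^2/rho_u + |e_w3|^2/rho_w + rho_u |e_u2|^2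
   + rho_w |e_w2|^2 decreases at each step by at least a nonnegative dissipation, because the
   discrete Laplacian is negative semidefinite and g is monotone. Hence the dissipation is
   summable, so e_u2 and the increments of e_u2, e_u3 and e_w3 vanish, and the error equations
   express the remaining errors through these vanishing quantities. *)

Section SequencesToZero.
Variable R : realType.
Implicit Types (s t V d : nat -> R).

Lemma cvg0D s t : s @ \oo --> 0 -> t @ \oo --> 0 -> (fun n => s n + t n) @ \oo --> 0.
Proof. by move=> s0 t0; rewrite -(addr0 0); apply: cvgD. Qed.

Lemma cvg0B s t : s @ \oo --> 0 -> t @ \oo --> 0 -> (fun n => s n - t n) @ \oo --> 0.
Proof. by move=> s0 t0; rewrite -(subr0 0); apply: cvgB. Qed.

Lemma cvg0Z c s : s @ \oo --> 0 -> (fun n => c * s n) @ \oo --> 0.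
Proof. by move=> s0; rewrite -(mulr0 c); apply: cvgMl_tmp. Qed.

Lemma cvg0_sqr s : (fun n => s n ^+ 2) @ \oo --> 0 -> s @ \oo --> 0.
Proof.
move=> s2_cvg0; apply: norm_cvg0.
have -> : (fun n => `|s n|) = Num.sqrt \o (fun n => s n ^+ 2).
  by apply/funext => n; rewrite /= sqrtr_sqr.
by rewrite -sqrtr0; apply: cvg_comp s2_cvg0 (@sqrt_continuous R 0).
Qed.

Lemma cvg0_sqr_le c s t : 0 < c -> (forall n, c * s n ^+ 2 <= t n) ->
  t @ \oo --> 0 -> s @ \oo --> 0.
Proof.
move=> c_gt0 le_st t_cvg0; apply: cvg0_sqr.
have cs_cvg0 : (fun n => c * s n ^+ 2) @ \oo --> 0.
  apply: (squeeze_cvgr _ (cvg_cst (0 : R)) t_cvg0); apply: nearW => n.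
  by apply/andP; split; [rewrite mulr_ge0 ?sqr_ge0 ?ltW | exact: le_st].
have -> : (fun n => s n ^+ 2) = (fun n => c^-1 * (c * s n ^+ 2)).
  by apply/funext => n; rewrite mulKf ?gt_eqF.
by rewrite -(mulr0 c^-1); apply: cvgMl_tmp.
Qed.

Lemma dissipation_cvg0 V d : (forall n, 0 <= V n) -> (forall n, 0 <= d n) ->
  (forall n, V n.+1 + d n <= V n) -> d @ \oo --> 0.
Proof.
move=> V_ge0 d_ge0 V_dissip.
have V_noninc : nonincreasing_seq V.
  by apply/nonincreasing_seqP => n; have := V_dissip n; have := d_ge0 n; lra.
have V_lb : has_lbound (range V) by exists 0 => _ [n _ <-].
have V_cvg := nonincreasing_cvgn V_noninc V_lb.
have VS_cvg : (fun n => V n.+1) @ \oo --> inf (V @` setT) by rewrite cvg_shiftS.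
have gap_cvg0 : (fun n => V n - V n.+1) @ \oo --> 0.
  by rewrite -(subrr (inf (V @` setT))); apply: cvgB.
apply: (squeeze_cvgr _ (cvg_cst (0 : R)) gap_cvg0); apply: nearW => n /=.
by rewrite d_ge0 /=; have := V_dissip n; lra.
Qed.

End SequencesToZero.

Section GridSums.
Variables (R : realType) (N : nat).
Implicit Types (f u v : grid R N) (E F : nat -> grid R N).

Definition gsum f : R := \sum_(p : 'I_N * ('I_N * 'I_N)) f p.1 p.2.1 p.2.2.

Lemma eq_gsum f1 f2 : (forall i j k, f1 i j k = f2 i j k) -> gsum f1 = gsum f2.
Proof. by move=> ef; apply: eq_bigr => p _; rewrite ef. Qed.

Lemma gsumD f1 f2 : gsum (fun i j k => f1 i j k + f2 i j k) = gsum f1 + gsum f2.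
Proof. exact: big_split. Qed.

Lemma gsumZ c f : gsum (fun i j k => c * f i j k) = c * gsum f.
Proof. by rewrite /gsum mulr_sumr. Qed.

Lemma ler_gsum f1 f2 : (forall i j k, f1 i j k <= f2 i j k) -> gsum f1 <= gsum f2.
Proof. by move=> le_f; apply: ler_sum => p _. Qed.

Lemma gsum_ge0 f : (forall i j k, 0 <= f i j k) -> 0 <= gsum f.
Proof. by move=> f_ge0; apply: sumr_ge0 => p _. Qed.

Lemma ler_point_gsum f i j k : (forall i j k, 0 <= f i j k) -> f i j k <= gsum f.
Proof.
move=> f_ge0; rewrite /gsum (bigD1 (i, (j, k))) //= lerDl.
by apply: sumr_ge0 => p _.
Qed.

Lemma ginnerE h u v : ginner h u v = h ^+ 2 * gsum (fun i j k => u i j k * v i j k).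
Proof.
rewrite /ginner /gsum; congr (_ * _).
by under eq_bigr => i _ do rewrite pair_big; rewrite pair_big.
Qed.

Lemma gsum_reindex f (s1 s2 s3 : 'I_N -> 'I_N) :
  injective s1 -> injective s2 -> injective s3 ->
  gsum (fun i j k => f (s1 i) (s2 j) (s3 k)) = gsum f.
Proof.
move=> s1_inj s2_inj s3_inj.
pose s p := (s1 p.1, (s2 p.2.1, s3 p.2.2)).
have s_inj : injective s.
  by move=> [i [j k]] [i' [j' k']] [/s1_inj -> /s2_inj -> /s3_inj ->].
by rewrite /gsum [RHS](reindex_inj s_inj).
Qed.

Lemma gsum_shift_mul_le (s1 s2 s3 : 'I_N -> 'I_N) u :
  injective s1 -> injective s2 -> injective s3 ->
  gsum (fun i j k => u (s1 i) (s2 j) (s3 k) * u i j k)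
    <= gsum (fun i j k => u i j k ^+ 2).
Proof.
move=> s1_inj s2_inj s3_inj.
have := gsum_reindex (fun i j k => u i j k ^+ 2) s1_inj s2_inj s3_inj.
set shifted := gsum _ => shifted_eq.
apply: (@le_trans _ _ (2^-1 * shifted + 2^-1 * gsum (fun i j k => u i j k ^+ 2))).
  rewrite -!gsumZ -gsumD; apply: ler_gsum => i j k.
  by have := sqr_ge0 (u (s1 i) (s2 j) (s3 k) - u i j k); lra.
by rewrite shifted_eq; lra.
Qed.

Lemma gsum_glap_mul_le0 h u : gsum (fun i j k => glap h u i j k * u i j k) <= 0.
Proof.
pose uu s1 s2 s3 := gsum (fun i j k => u (s1 i) (s2 j) (s3 k) * u i j k).
have -> : gsum (fun i j k => glap h u i j k * u i j k) = h ^- 2 *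
    (uu (@ordS N) id id + uu (@ord_pred N) id id
     + uu id (@ordS N) id + uu id (@ord_pred N) id
     + uu id id (@ordS N) + uu id id (@ord_pred N)
     + (-6) * gsum (fun i j k => u i j k ^+ 2)).
  rewrite /uu -!gsumD -gsumZ -gsumD -gsumZ.
  by apply: eq_gsum => i j k /=; rewrite /glap; ring.
rewrite mulr_ge0_le0 ?invr_ge0 ?sqr_ge0 //.
have id_inj : injective (@id 'I_N) := @inj_id _.
have := gsum_shift_mul_le u (@ordS_inj N) id_inj id_inj.
have := gsum_shift_mul_le u (@ord_pred_inj N) id_inj id_inj.
have := gsum_shift_mul_le u id_inj (@ordS_inj N) id_inj.
have := gsum_shift_mul_le u id_inj (@ord_pred_inj N) id_inj.
have := gsum_shift_mul_le u id_inj id_inj (@ordS_inj N).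
have := gsum_shift_mul_le u id_inj id_inj (@ord_pred_inj N).
rewrite /uu; lra.
Qed.

Lemma glapB h u v i j k : glap h (gsub u v) i j k = glap h u i j k - glap h v i j k.
Proof. by rewrite /glap /gsub; ring. Qed.

Definition gcvg0 E := forall i j k, (fun n => E n i j k) @ \oo --> 0.

Lemma eq_gcvg0 E F : (forall n i j k, E n i j k = F n i j k) -> gcvg0 E -> gcvg0 F.
Proof.
move=> EF E0 i j k.
by have <- : (fun n => E n i j k) = (fun n => F n i j k) by apply/funext => n.
Qed.

Lemma gcvg0D E F : gcvg0 E -> gcvg0 F -> gcvg0 (fun n i j k => E n i j k + F n i j k).
Proof. by move=> E0 F0 i j k; apply: cvg0D. Qed.

Lemma gcvg0Z c E : gcvg0 E -> gcvg0 (fun n i j k => c * E n i j k).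
Proof. by move=> E0 i j k; apply: cvg0Z. Qed.

Lemma gcvg0_shiftS E : gcvg0 (fun n => E n.+1) <-> gcvg0 E.
Proof.
split=> E0 i j k; first by rewrite -cvg_shiftS; apply: E0.
by have := E0 i j k; rewrite -cvg_shiftS.
Qed.

Lemma gcvg0_glap h E : gcvg0 E -> gcvg0 (fun n => glap h (E n)).
Proof.
move=> E0 i j k; rewrite /glap; apply: cvg0Z.
by apply: cvg0B; [repeat apply: cvg0D | apply: cvg0Z]; apply: E0.
Qed.

Lemma gsum_cvg0 E : gcvg0 E -> (fun n => gsum (E n)) @ \oo --> 0.
Proof.
move=> E0; have <- : \sum_(p : 'I_N * ('I_N * 'I_N)) (0 : R) = 0 by rewrite big1.
by apply: (cvg_big add_continuous) => p _; apply: E0.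
Qed.

Lemma gnorm2_cvg0 h E : gcvg0 E -> (fun n => gnorm2 h (E n)) @ \oo --> 0.
Proof.
move=> E0; rewrite -sqrtr0 -(mulr0 (h ^+ 2)) /gnorm2.
have sq_cvg0 : (fun n => gsum (fun i j k => E n i j k * E n i j k)) @ \oo --> 0.
  by apply: gsum_cvg0 => i j k; rewrite -(mulr0 0); apply: cvgM; apply: E0.
under eq_cvg do rewrite ginnerE.
exact: cvg_comp (cvgMl_tmp sq_cvg0) (@sqrt_continuous R _).
Qed.

End GridSums.

Section LogDiff.
Variable R : realType.

Definition logdiff (z : R) := ln (1 + z) - ln (1 - z).

Lemma ln_sub_ge (a b : R) : 0 < a -> 0 < b -> (a - b) / a <= ln a - ln b.
Proof.
move=> a_gt0 b_gt0.
have ba_gt0 : 0 < b / a by rewrite divr_gt0.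
have : ln (1 + (b / a - 1)) <= b / a - 1 by apply: le_ln1Dx; lra.
rewrite addrC subrK ln_div ?posrE // mulrBl divff ?gt_eqF //; lra.
Qed.

Lemma logdiff_sub_ge (x y : R) : -1 < y -> y <= x -> x < 1 ->
  x - y <= logdiff x - logdiff y.
Proof.
move=> y_gtN1 le_yx x_lt1.
have sub_ge (a b : R) : 0 < b -> b <= a -> a <= 2 -> (a - b) / 2 <= ln a - ln b.
  move=> b_gt0 le_ba a_le2; apply: le_trans (ln_sub_ge _ _) => //; last by lra.
  by rewrite ler_wpM2l ?subr_ge0 // lef_pV2 ?posrE //; lra.
have up : ((1 + x) - (1 + y)) / 2 <= ln (1 + x) - ln (1 + y) by apply: sub_ge; lra.
have down : ((1 - y) - (1 - x)) / 2 <= ln (1 - y) - ln (1 - x) by apply: sub_ge; lra.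
by rewrite /logdiff; lra.
Qed.

Lemma logdiff_strongly_monotone (x y : R) : -1 < x < 1 -> -1 < y < 1 ->
  (x - y) ^+ 2 <= (logdiff x - logdiff y) * (x - y).
Proof.
wlog le_yx : x y / y <= x => [wlog_le | /andP[_ x_lt1] /andP[y_gtN1 _]].
  move=> x_in y_in; have [/wlog_le|/ltW /wlog_le] := leP y x; first exact.
  by move=> /(_ y_in x_in); rewrite -opprB sqrrN mulrN -mulNr opprB.
rewrite expr2 ler_wpM2r ?subr_ge0 //.
exact: logdiff_sub_ge.
Qed.

Lemma continuous_logdiff (x : R) : -1 < x < 1 -> {for x, continuous logdiff}.
Proof.
move=> /andP[x_gtN1 x_lt1].
have ln_cont (f : R -> R) : {for x, continuous f} -> 0 < f x ->
    {for x, continuous (@ln R \o f)}.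
  by move=> f_cont f_gt0; apply: continuous_comp => //; exact: continuous_ln.
apply: (@continuousB _ _ _ (@ln R \o (fun z => 1 + z)) (@ln R \o (fun z => 1 - z))).
  apply: ln_cont; last by rewrite /=; lra.
  by apply: continuousD; [exact: cvg_cst | exact: cvg_id].
apply: ln_cont; last by rewrite /=; lra.
by apply: continuousB; [exact: cvg_cst | exact: cvg_id].
Qed.

End LogDiff.

(* a, b, c, d, p, q are the errors of u1, w1, u2, w2, u3, w3 after a step and c0, d0, p0, q0
   those before it; x and y stand for eps^2 Lap a and tau Lap b, G and G0 for g(u2) - g(us). *)
Lemma admm_energy_identity (F : fieldType) (alpha rho_u rho_w : F)
    (a b c d p q c0 d0 p0 q0 x y G G0 : F) :
  rho_u != 0 -> rho_w != 0 ->
  x = - alpha * b + p0 + rho_u * (a - c0) ->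
  y = alpha * a + q0 + rho_w * (b - d0) ->
  p = p0 + rho_u * (a - c) -> q = q0 + rho_w * (b - d) ->
  G = (1 - alpha) * d + p -> G0 = (1 - alpha) * d0 + p0 ->
  q = (1 - alpha) * c -> q0 = (1 - alpha) * c0 ->
  rho_u^-1 * p ^+ 2 + rho_w^-1 * q ^+ 2 + rho_u * c ^+ 2 + rho_w * d ^+ 2
  + (rho_u^-1 * (p - p0) ^+ 2 + rho_w^-1 * (q - q0) ^+ 2 + rho_u * (c - c0) ^+ 2
     + rho_w * (d - d0) ^+ 2 + 2 * (c - c0) * (G - G0) + 2 * G * c)
  = rho_u^-1 * p0 ^+ 2 + rho_w^-1 * q0 ^+ 2 + rho_u * c0 ^+ 2 + rho_w * d0 ^+ 2
    + 2 * x * a + 2 * y * b.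
Proof.
move=> rho_u_neq0 rho_w_neq0 -> -> -> q_eq -> -> q_c q0_c.
have b_eq : b = d + (1 - alpha) * (c - c0) / rho_w.
  by rewrite mulrBr -q_c -q0_c q_eq; field.
by rewrite q_c q0_c b_eq; field; apply/andP.
Qed.

(* Algorithm 1 with ln(1+z) - ln(1-z) replaced by any continuous, strongly monotone g on a
   domain D; the initial values play no role. *)
Section AdmmConvergence.
Variables (R : realType) (N : nat) (h eps tau alpha theta0 rho_u rho_w mu : R).
Variables (D : R -> Prop) (g : R -> R).
Hypotheses (tau_gt0 : 0 < tau) (rho_u_gt0 : 0 < rho_u) (rho_w_gt0 : 0 < rho_w).
Hypothesis mu_gt0 : 0 < mu.
Hypothesis g_strongly_monotone :
  forall x y, D x -> D y -> mu * (x - y) ^+ 2 <= (g x - g y) * (x - y).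
Hypothesis g_continuous : forall x, D x -> {for x, continuous g}.

Variables (un us ws u3s w3s : grid R N).
Hypothesis us_D : forall i j k, D (us i j k).
Hypothesis stat_u1 : forall i j k,
  - eps ^+ 2 * glap h us i j k - alpha * ws i j k + u3s i j k = 0.
Hypothesis stat_w1 : forall i j k,
  alpha * (- us i j k + un i j k) + tau * glap h ws i j k - w3s i j k = 0.
Hypothesis stat_u2 : forall i j k,
  g (us i j k) - theta0 * un i j k - (1 - alpha) * ws i j k - u3s i j k = 0.
Hypothesis stat_w2 : forall i j k,
  (1 - alpha) * (- us i j k + un i j k) + w3s i j k = 0.

Variables (u1 w1 u2 w2 u3 w3 : nat -> grid R N).
Hypothesis step_u1 : forall n i j k,
  - eps ^+ 2 * glap h (u1 n.+1) i j k - alpha * w1 n.+1 i j k + u3 n i j k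
  + rho_u * (u1 n.+1 i j k - u2 n i j k) = 0.
Hypothesis step_w1 : forall n i j k,
  alpha * (- u1 n.+1 i j k + un i j k) + tau * glap h (w1 n.+1) i j k
  - w3 n i j k - rho_w * (w1 n.+1 i j k - w2 n i j k) = 0.
Hypothesis u2_D : forall n i j k, D (u2 n.+1 i j k).
Hypothesis step_u2 : forall n i j k,
  g (u2 n.+1 i j k) - theta0 * un i j k - (1 - alpha) * w2 n.+1 i j k - u3 n i j k
  - rho_u * (u1 n.+1 i j k - u2 n.+1 i j k) = 0.
Hypothesis step_w2 : forall n i j k,
  (1 - alpha) * (- u2 n.+1 i j k + un i j k) + w3 n i j k
  + rho_w * (w1 n.+1 i j k - w2 n.+1 i j k) = 0.
Hypothesis step_u3 : forall n i j k,
  u3 n.+1 i j k = u3 n i j k + rho_u * (u1 n.+1 i j k - u2 n.+1 i j k).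
Hypothesis step_w3 : forall n i j k,
  w3 n.+1 i j k = w3 n i j k + rho_w * (w1 n.+1 i j k - w2 n.+1 i j k).

Let eu1 n := gsub (u1 n) us.
Let ew1 n := gsub (w1 n) ws.
Let eu2 n := gsub (u2 n) us.
Let ew2 n := gsub (w2 n) ws.
Let eu3 n := gsub (u3 n) u3s.
Let ew3 n := gsub (w3 n) w3s.
Let eg n : grid R N := fun i j k => g (u2 n i j k) - g (us i j k).

Lemma err_step_u1 n i j k : eps ^+ 2 * glap h (eu1 n.+1) i j k
  = - alpha * ew1 n.+1 i j k + eu3 n i j k + rho_u * (eu1 n.+1 i j k - eu2 n i j k).
Proof.
rewrite glapB; have := step_u1 n i j k; have := stat_u1 i j k.
by rewrite /eu1 /ew1 /eu3 /eu2 /gsub; lra.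
Qed.

Lemma err_step_w1 n i j k : tau * glap h (ew1 n.+1) i j k
  = alpha * eu1 n.+1 i j k + ew3 n i j k + rho_w * (ew1 n.+1 i j k - ew2 n i j k).
Proof.
rewrite glapB; have := step_w1 n i j k; have := stat_w1 i j k.
by rewrite /eu1 /ew1 /ew3 /ew2 /gsub; lra.
Qed.

Lemma err_step_u3 n i j k :
  eu3 n.+1 i j k = eu3 n i j k + rho_u * (eu1 n.+1 i j k - eu2 n.+1 i j k).
Proof. by rewrite /eu3 /eu1 /eu2 /gsub step_u3; ring. Qed.

Lemma err_step_w3 n i j k :
  ew3 n.+1 i j k = ew3 n i j k + rho_w * (ew1 n.+1 i j k - ew2 n.+1 i j k).
Proof. by rewrite /ew3 /ew1 /ew2 /gsub step_w3; ring. Qed.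

Lemma err_g_u2 n i j k : eg n.+1 i j k = (1 - alpha) * ew2 n.+1 i j k + eu3 n.+1 i j k.
Proof.
have := step_u2 n i j k; have := stat_u2 i j k; rewrite err_step_u3.
by rewrite /eg /ew2 /eu3 /eu1 /eu2 /gsub; lra.
Qed.

Lemma err_w3_u2 n i j k : ew3 n.+1 i j k = (1 - alpha) * eu2 n.+1 i j k.
Proof.
have := step_w2 n i j k; have := stat_w2 i j k; rewrite err_step_w3.
by rewrite /ew3 /ew1 /ew2 /eu2 /gsub; lra.
Qed.

Let energy n : grid R N := fun i j k =>
  rho_u^-1 * eu3 n i j k ^+ 2 + rho_w^-1 * ew3 n i j k ^+ 2
  + rho_u * eu2 n i j k ^+ 2 + rho_w * ew2 n i j k ^+ 2.

Let dissip n : grid R N := fun i j k =>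
  rho_u^-1 * (eu3 n.+1 i j k - eu3 n i j k) ^+ 2
  + rho_w^-1 * (ew3 n.+1 i j k - ew3 n i j k) ^+ 2
  + rho_u * (eu2 n.+1 i j k - eu2 n i j k) ^+ 2
  + rho_w * (ew2 n.+1 i j k - ew2 n i j k) ^+ 2
  + 2 * (eu2 n.+1 i j k - eu2 n i j k) * (eg n.+1 i j k - eg n i j k)
  + 2 * eg n.+1 i j k * eu2 n.+1 i j k.

Lemma energy_step n i j k : energy n.+2 i j k + dissip n.+1 i j k
  = energy n.+1 i j k
    + 2 * eps ^+ 2 * (glap h (eu1 n.+2) i j k * eu1 n.+2 i j k)
    + 2 * tau * (glap h (ew1 n.+2) i j k * ew1 n.+2 i j k).
Proof.
have := admm_energy_identity (lt0r_neq0 rho_u_gt0) (lt0r_neq0 rho_w_gt0)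
  (err_step_u1 n.+1 i j k) (err_step_w1 n.+1 i j k)
  (err_step_u3 n.+1 i j k) (err_step_w3 n.+1 i j k)
  (err_g_u2 n.+1 i j k) (err_g_u2 n i j k) (err_w3_u2 n.+1 i j k) (err_w3_u2 n i j k).
by rewrite /energy /dissip; lra.
Qed.

Lemma energy_decrease n :
  gsum (energy n.+2) + gsum (dissip n.+1) <= gsum (energy n.+1).
Proof.
have lap_u := gsum_glap_mul_le0 h (eu1 n.+2).
have lap_w := gsum_glap_mul_le0 h (ew1 n.+2).
have eps_ge0 : 0 <= 2 * eps ^+ 2 by rewrite mulr_ge0 ?sqr_ge0.
have tau_ge0 : 0 <= 2 * tau by rewrite mulr_ge0 ?ltW.
by rewrite -gsumD (eq_gsum (energy_step n)) !gsumD !gsumZ; nra.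
Qed.

Let rho_uV_gt0 : 0 < rho_u^-1. Proof. by rewrite invr_gt0. Qed.
Let rho_wV_gt0 : 0 < rho_w^-1. Proof. by rewrite invr_gt0. Qed.

Lemma eg_monotone n i j k : mu * eu2 n.+1 i j k ^+ 2 <= eg n.+1 i j k * eu2 n.+1 i j k.
Proof. exact: g_strongly_monotone (u2_D n i j k) (us_D i j k). Qed.

Lemma eg_increment_monotone n i j k :
  mu * (eu2 n.+2 i j k - eu2 n.+1 i j k) ^+ 2
    <= (eg n.+2 i j k - eg n.+1 i j k) * (eu2 n.+2 i j k - eu2 n.+1 i j k).
Proof.
have := g_strongly_monotone (u2_D n.+1 i j k) (u2_D n i j k).
by rewrite /eg /eu2 /gsub !opprB !addrA !subrK.
Qed.

Lemma dissip_ge n i j k :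
  [/\ 0 <= dissip n.+1 i j k,
      rho_u^-1 * (eu3 n.+2 i j k - eu3 n.+1 i j k) ^+ 2 <= dissip n.+1 i j k,
      rho_w^-1 * (ew3 n.+2 i j k - ew3 n.+1 i j k) ^+ 2 <= dissip n.+1 i j k,
      rho_u * (eu2 n.+2 i j k - eu2 n.+1 i j k) ^+ 2 <= dissip n.+1 i j k &
      mu * eu2 n.+2 i j k ^+ 2 <= dissip n.+1 i j k].
Proof.
have sq_ge0 (c x : R) : 0 < c -> 0 <= c * x ^+ 2.
  by move=> /ltW c_ge0; rewrite mulr_ge0 ?sqr_ge0.
have du3 := sq_ge0 _ (eu3 n.+2 i j k - eu3 n.+1 i j k) rho_uV_gt0.
have dw3 := sq_ge0 _ (ew3 n.+2 i j k - ew3 n.+1 i j k) rho_wV_gt0.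
have du2 := sq_ge0 _ (eu2 n.+2 i j k - eu2 n.+1 i j k) rho_u_gt0.
have dw2 := sq_ge0 _ (ew2 n.+2 i j k - ew2 n.+1 i j k) rho_w_gt0.
have du2_mu := sq_ge0 _ (eu2 n.+2 i j k - eu2 n.+1 i j k) mu_gt0.
have u2_mu := sq_ge0 _ (eu2 n.+2 i j k) mu_gt0.
have mono := eg_monotone n.+1 i j k; have incr_mono := eg_increment_monotone n i j k.
by rewrite /dissip; split; lra.
Qed.

Lemma gsum_dissip_cvg0 : (fun n => gsum (dissip n.+1)) @ \oo --> 0.
Proof.
apply: (@dissipation_cvg0 _ (fun n => gsum (energy n.+1))) => n.
- apply: gsum_ge0 => i j k.
  by rewrite /energy !addr_ge0 // mulr_ge0 ?sqr_ge0 // ltW.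
- by apply: gsum_ge0 => i j k; case: (dissip_ge n i j k).
- exact: energy_decrease.
Qed.

Lemma dissip_dominated c (E : nat -> grid R N) : 0 < c ->
  (forall n i j k, c * E n i j k ^+ 2 <= dissip n.+1 i j k) -> gcvg0 E.
Proof.
move=> c_gt0 E_le i j k; apply: (cvg0_sqr_le c_gt0 _ gsum_dissip_cvg0) => n.
apply: le_trans (E_le n i j k) _; apply: ler_point_gsum => a b c'.
by case: (dissip_ge n a b c').
Qed.

Lemma dissipated_terms_cvg0 :
  [/\ gcvg0 eu2, gcvg0 (fun n => gsub (eu3 n.+1) (eu3 n)),
      gcvg0 (fun n => gsub (ew3 n.+1) (ew3 n))
    & gcvg0 (fun n => gsub (eu2 n.+1) (eu2 n))].
Proof.
split.
- do 2 apply: (gcvg0_shiftS _).1; apply: (dissip_dominated mu_gt0) => n i j k /=.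
  by case: (dissip_ge n i j k).
- apply: (gcvg0_shiftS _).1; apply: (dissip_dominated rho_uV_gt0) => n i j k /=.
  by case: (dissip_ge n i j k).
- apply: (gcvg0_shiftS _).1; apply: (dissip_dominated rho_wV_gt0) => n i j k /=.
  by case: (dissip_ge n i j k).
- apply: (gcvg0_shiftS _).1; apply: (dissip_dominated rho_u_gt0) => n i j k /=.
  by case: (dissip_ge n i j k).
Qed.

Lemma eg_cvg0 : gcvg0 eu2 -> gcvg0 eg.
Proof.
move=> eu2_0 i j k; rewrite /eg /=; apply/subr_cvg0.
have u2_cvg : (fun n => u2 n i j k) @ \oo --> us i j k by apply/subr_cvg0; exact: eu2_0.
exact: cvg_comp u2_cvg (g_continuous (us_D i j k)).
Qed.

Lemma shifted_errors_cvg0 :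
  [/\ gcvg0 (fun n => eu1 n.+1), gcvg0 (fun n => ew1 n.+1), gcvg0 (fun n => ew2 n.+1),
      gcvg0 (fun n => eu3 n.+1) & gcvg0 (fun n => ew3 n.+1)].
Proof.
have [eu2_0 deu3_0 dew3_0 deu2_0] := dissipated_terms_cvg0.
have eu2S_0 := (gcvg0_shiftS eu2).2 eu2_0.
have egS_0 := (gcvg0_shiftS eg).2 (eg_cvg0 eu2_0).
have eu1_0 : gcvg0 (fun n => eu1 n.+1).
  apply: eq_gcvg0 (gcvg0D (gcvg0Z rho_u^-1 deu3_0) eu2S_0) => n i j k /=.
  by rewrite /gsub (err_step_u3 n); field; exact: lt0r_neq0.
have ew3_0 : gcvg0 (fun n => ew3 n.+1).
  by apply: eq_gcvg0 (gcvg0Z (1 - alpha) eu2S_0) => n i j k /=; rewrite err_w3_u2.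
have ew12_0 : gcvg0 (fun n => gsub (ew1 n.+1) (ew2 n.+1)).
  apply: eq_gcvg0 (gcvg0Z rho_w^-1 dew3_0) => n i j k /=.
  by rewrite /gsub (err_step_w3 n); field; exact: lt0r_neq0.
have ew1_0 : gcvg0 (fun n => ew1 n.+1).
  have lap_0 := gcvg0_glap h eu1_0.
  apply: eq_gcvg0 (gcvg0D (gcvg0D (gcvg0D (gcvg0Z (- eps ^+ 2) lap_0)
    (gcvg0Z rho_u deu2_0)) egS_0) (gcvg0Z (1 - alpha) ew12_0)) => n i j k /=.
  have := err_step_u1 n i j k; have := err_step_u3 n i j k; have := err_g_u2 n i j k.
  by rewrite /gsub; lra.
have ew2_0 : gcvg0 (fun n => ew2 n.+1).
  apply: eq_gcvg0 (gcvg0D ew1_0 (gcvg0Z (-1) ew12_0)) => n i j k /=.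
  by rewrite /gsub; ring.
have eu3_0 : gcvg0 (fun n => eu3 n.+1).
  apply: eq_gcvg0 (gcvg0D egS_0 (gcvg0Z (alpha - 1) ew2_0)) => n i j k /=.
  by rewrite err_g_u2; ring.
by split.
Qed.

Theorem admm_errors_cvg0 :
  (fun n => gnorm2 h (eu1 n)) @ \oo --> 0 /\ (fun n => gnorm2 h (ew1 n)) @ \oo --> 0 /\
  (fun n => gnorm2 h (eu2 n)) @ \oo --> 0 /\ (fun n => gnorm2 h (ew2 n)) @ \oo --> 0 /\
  (fun n => gnorm2 h (eu3 n)) @ \oo --> 0 /\ (fun n => gnorm2 h (ew3 n)) @ \oo --> 0.
Proof.
have [eu2_0 _ _ _] := dissipated_terms_cvg0.
have [eu1_0 ew1_0 ew2_0 eu3_0 ew3_0] := shifted_errors_cvg0.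
by do !split; apply: gnorm2_cvg0 => //; apply: (gcvg0_shiftS _).1.
Qed.

End AdmmConvergence.

Theorem proposition4p3 (R : realType) (L : R) (N : nat)
  (eps theta0 tau alpha rho_u rho_w : R) (un : grid R N)
  (u1 w1 u2 w2 u3 w3 : nat -> grid R N)
  (u1s w1s u2s w2s u3s w3s : grid R N) :
  0 < L -> (0 < N)%N ->
  0 < eps -> 0 < theta0 -> 0 < tau -> 0 < alpha -> alpha < 1 ->
  0 < rho_u -> 0 < rho_w ->
  (forall i j k, -1 < un i j k /\ un i j k < 1) ->
  let h := L / N%:R in
  (* stationary point of the Lagrange function *)
  (forall i j k, -1 < u2s i j k /\ u2s i j k < 1) ->
  (forall i j k, - eps ^+ 2 * glap h u1s i j k - alpha * w1s i j k + u3s i j k = 0) ->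
  (forall i j k, alpha * (- u1s i j k + un i j k) + tau * glap h w1s i j k
                 - w3s i j k = 0) ->
  (forall i j k, ln (1 + u2s i j k) - ln (1 - u2s i j k) - theta0 * un i j k
                 - (1 - alpha) * w2s i j k - u3s i j k = 0) ->
  (forall i j k, (1 - alpha) * (- u2s i j k + un i j k) + w3s i j k = 0) ->
  u1s = u2s -> w1s = w2s ->
  (* Algorithm 1: initialisation *)
  u2 0%N = un -> w2 0%N = (fun _ _ _ => 0) ->
  u3 0%N = (fun _ _ _ => 0) -> w3 0%N = (fun _ _ _ => 0) ->
  (* step (i) *)
  (forall n i j k,
     - eps ^+ 2 * glap h (u1 n.+1) i j k - alpha * w1 n.+1 i j k + u3 n i j k
     + rho_u * (u1 n.+1 i j k - u2 n i j k) = 0) ->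
  (forall n i j k,
     alpha * (- u1 n.+1 i j k + un i j k) + tau * glap h (w1 n.+1) i j k
     - w3 n i j k - rho_w * (w1 n.+1 i j k - w2 n i j k) = 0) ->
  (* step (ii) *)
  (forall n i j k, -1 < u2 n.+1 i j k /\ u2 n.+1 i j k < 1) ->
  (forall n i j k,
     ln (1 + u2 n.+1 i j k) - ln (1 - u2 n.+1 i j k) - theta0 * un i j k
     - (1 - alpha) * w2 n.+1 i j k - u3 n i j k
     - rho_u * (u1 n.+1 i j k - u2 n.+1 i j k) = 0) ->
  (forall n i j k,
     (1 - alpha) * (- u2 n.+1 i j k + un i j k) + w3 n i j k
     + rho_w * (w1 n.+1 i j k - w2 n.+1 i j k) = 0) ->
  (* step (iii) *)
  (forall n i j k,
     u3 n.+1 i j k = u3 n i j k + rho_u * (u1 n.+1 i j k - u2 n.+1 i j k)) ->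
  (forall n i j k,
     w3 n.+1 i j k = w3 n i j k + rho_w * (w1 n.+1 i j k - w2 n.+1 i j k)) ->
  (((fun n => gnorm2 h (gsub (u1 n) u1s)) @ \oo --> 0) /\
      ((fun n => gnorm2 h (gsub (w1 n) w1s)) @ \oo --> 0) /\
      ((fun n => gnorm2 h (gsub (u2 n) u2s)) @ \oo --> 0) /\
      ((fun n => gnorm2 h (gsub (w2 n) w2s)) @ \oo --> 0) /\
      ((fun n => gnorm2 h (gsub (u3 n) u3s)) @ \oo --> 0) /\
      ((fun n => gnorm2 h (gsub (w3 n) w3s)) @ \oo --> 0)).
Proof.
move=> _ _ _ _ tau_gt0 _ _ rho_u_gt0 rho_w_gt0 _ h us_in stat_u1 stat_w1 stat_u2 stat_w2
  u1s_eq w1s_eq _ _ _ _ step_u1 step_w1 u2_in step_u2 step_w2 step_u3 step_w3.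
subst u1s w1s.
have logdiff_mono (x y : R) : -1 < x /\ x < 1 -> -1 < y /\ y < 1 ->
    1 * (x - y) ^+ 2 <= (logdiff x - logdiff y) * (x - y).
  by move=> [? ?] [? ?]; rewrite mul1r logdiff_strongly_monotone //; apply/andP.
have logdiff_cont (x : R) : -1 < x /\ x < 1 -> {for x, continuous (@logdiff R)}.
  by move=> [? ?]; apply: continuous_logdiff; apply/andP.
exact: (admm_errors_cvg0 tau_gt0 rho_u_gt0 rho_w_gt0 ltr01 logdiff_mono logdiff_cont
  us_in stat_u1 stat_w1 stat_u2 stat_w2 step_u1 step_w1 u2_in step_u2 step_w2 step_u3 step_w3).
Qed.
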